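(* Let $Q$ be a nonempty subset of a normed linear space $(U,\|\cdot\|)$. Let $r>0$ and let $\{\beta_n\}_n$ be a sequence of positive real numbers with $\lim_{n\to\infty}\beta_n=1$. Suppose $T:Q\to Q$ satisfies: for all $p,q\in Q$ with $\|p-q\|<r$, $\|T^np-T^nq\|\leq\beta_n\|p-q\|$ for every $n\in\mathbb{N}$. Let $\{q_n\}_n$ be a sequence in $Q$ such that $\|Tq_n-q_n\|\to 0$ as $n\to\infty$. Then for each $m\in\mathbb{N}$, $\|T^mq_n-q_n\|\to 0$ as $n\to\infty$. *)

From HB Require Import structures.
From mathcomp Require Import all_boot all_order all_algebra.
From mathcomp Require Import all_classical all_reals all_analysis.

From HB Require Import structures.
From mathcomp Require Import all_boot all_order all_algebra.
From mathcomp Require Import all_classical all_reals all_analysis.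
Import Order.TTheory GRing.Theory Num.Theory.
Import numFieldNormedType.Exports.
Local Open Scope classical_set_scope.
Local Open Scope ring_scope.

(* Telescoping the orbit x, Tx, ..., T^m x bounds |T^m x - x| by the sum of
   the steps |T^(k+1) x - T^k x| = |T^k (Tx) - T^k x|.  Once |Tx - x| < r,
   each step with k > 0 is at most beta k |Tx - x|, so
   |T^m x - x| <= (1 + beta 1 + ... + beta (m-1)) |Tx - x|,
   and the right-hand side tends to 0 along q_n for every fixed m. *)

Lemma norm_iter_sub_le_sum {R : numDomainType} {V : normedZmodType R}
    (T : V -> V) (x : V) (m : nat) :
  `|iter m T x - x| <= \sum_(0 <= k < m) `|iter k.+1 T x - iter k T x|.
Proof.
have -> : iter m T x - x = \sum_(0 <= k < m) (iter k.+1 T x - iter k T x).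
  by rewrite (telescope_sumr (fun k => iter k T x)).
exact: ler_norm_sum.
Qed.

Section LocallyLipschitzIterates.
Context {R : realType} {U : normedModType R} {Q : set U}.
Context {r : R} {beta : nat -> R} {T : U -> U}.
Hypothesis QT : forall p, Q p -> Q (T p).
Hypothesis iter_lipschitz : forall p p', Q p -> Q p' -> `|p - p'| < r ->
  forall n, (0 < n)%N -> `|iter n T p - iter n T p'| <= beta n * `|p - p'|.

Lemma norm_iter_sub_le (x : U) (m : nat) : Q x -> `|T x - x| < r ->
  `|iter m T x - x| <= (1 + \sum_(1 <= k < m) beta k) * `|T x - x|.
Proof.
move=> Qx small_step; apply: (le_trans (norm_iter_sub_le_sum T x m)).
case: m => [|m]; first by rewrite !big_geq // addr0 mul1r.
rewrite big_ltn // mulrDl mul1r big_distrl lerD //.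
apply: ler_sum_nat => k /andP[k_gt0 _].
by rewrite iterSr iter_lipschitz //; exact: QT.
Qed.

End LocallyLipschitzIterates.

Theorem mainTheorem3 (R : realType) (U : normedModType R) (Q : set U)
  (r : R) (beta : nat -> R) (T : U -> U) (q : nat -> U) :
  Q !=set0 ->
  0 < r ->
  (forall n, 0 < beta n) ->
  beta @ \oo --> (1 : R) ->
  (forall p, Q p -> Q (T p)) ->
  (forall p p', Q p -> Q p' -> `|p - p'| < r ->
     forall n, (0 < n)%N -> `|iter n T p - iter n T p'| <= beta n * `|p - p'|) ->
  (forall n, Q (q n)) ->
  (fun n => `|T (q n) - q n|) @ \oo --> (0 : R) ->
  forall m : nat, (fun n => `|iter m T (q n) - q n|) @ \oo --> (0 : R).
Proof.
move=> _ r_gt0 _ _ QT iter_lipschitz Qq step_cvg0 m.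
set C := 1 + \sum_(1 <= k < m) beta k.
apply: (@squeeze_cvgr _ _ _ _ (fun=> 0) (fun n => C * `|T (q n) - q n|)).
- near=> n; rewrite normr_ge0 /=.
  apply: (norm_iter_sub_le QT iter_lipschitz _ m (Qq n)).
  near: n; exact: cvgr_lt _ step_cvg0 _ r_gt0.
- exact: cvg_cst.
- by rewrite -(mulr0 C); exact: cvgMl_tmp.
Unshelve. all: end_near.
Qed.
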